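(* Let $m\geq 4$. There is a constant $\tilde C_m$, depending only on $m$, with $\tilde C_m>0$ when $m\geq 5$ and $\tilde C_4=0$, such that for every non-negative continuous $\frac{2\pi}{m}$-periodic function $h:\mathbb{R}\to\mathbb{R}$, \[ c_h:=12\,(\partial_{\theta\theta}+4)^{-1}h\ \geq\ \tilde C_m\,\frac{1}{2\pi}\int_{-\pi}^{\pi}h . \] Moreover, if there exists $\theta$ with $c_h(\theta)=0$, then necessarily $h\equiv0$.
   Context: For $m\ge3$, $(\partial_{\theta\theta}+4)^{-1}$ denotes the inverse of $\partial_{\theta\theta}+4$ acting on $2\pi/m$-periodic functions on $\mathbb{R}$ (equivalently $m$-fold symmetric functions on $\mathbb{S}^1=\mathbb{R}/2\pi\mathbb{Z}$), which is well defined since such functions have no Fourier modes $\pm2$. *)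

From Stdlib Require Import Reals.
From Coquelicot Require Import Coquelicot.
Open Scope R_scope.

Definition periodic (T : R) (f : R -> R) : Prop := forall x, f (x + T) = f x.

(* u = (d^2/dtheta^2 + 4)^{-1} h on 2pi/m-periodic functions:
   u is the 2pi/m-periodic, twice differentiable solution of u'' + 4 u = h.
   For m >= 3 this solution is unique (the kernel cos 2t, sin 2t is not
   2pi/m-periodic), and it exists for continuous 2pi/m-periodic h. *)
Definition inv_op_d2_plus4 (m : nat) (h u : R -> R) : Prop :=
  periodic (2 * PI / INR m) u /\
  (forall x, ex_derive u x) /\
  (forall x, ex_derive (Derive u) x) /\
  (forall x, Derive (Derive u) x + 4 * u x = h x).

From Stdlib Require Import Reals Lra ZArith.
From Coquelicot Require Import Coquelicot.
Open Scope R_scope.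

(* Let T = 2π/m.  Integrating (cos(2(p-θ)-T) u' + 2 sin(2(p-θ)-T) u)' = cos(2(p-θ)-T) (u'' + 4u)
   over one period [θ, θ+T] gives the Green representation
     4 sin T · u(θ) = ∫_θ^{θ+T} cos(2(p-θ)-T) h(p) dp.
   For m ≥ 4 we have T ≤ π/2, so the kernel lies in [cos T, 1]: hence
   4 sin T · u(θ) ≥ cos T ∫_0^T h = cos T · (T/2π) ∫_{-π}^{π} h, which is the bound with
   C̃_m = 3 T cos T / sin T (zero exactly when T = π/2).  The kernel is positive inside
   the period, so u(θ) = 0 forces h = 0 on (θ, θ+T), hence everywhere by continuity and
   periodicity. *)

Lemma ex_RInt_continuous_R (f : R -> R) a b :
  (forall x, continuous f x) -> ex_RInt f a b.
Proof. intros Hc; apply (@ex_RInt_continuous R_CompleteNormedModule); intros; apply Hc. Qed.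

Lemma continuous_cos_affine (a b c : R) x : continuous (fun p => cos (a * (p - b) - c)) x.
Proof. apply (@ex_derive_continuous R_AbsRing R_NormedModule); auto_derive; exact I. Qed.

Lemma cos_le_cos_bound a z : a <= PI -> - a <= z <= a -> cos a <= cos z.
Proof.
  intros Ha Hz. destruct (Rle_dec 0 z).
  - apply cos_decr_1; lra.
  - rewrite <- (cos_neg z). apply cos_decr_1; lra.
Qed.

Section Periodic.
Variables (T : R) (f : R -> R).
Hypothesis f_per : periodic T f.

Lemma periodic_nat n x : f (x + INR n * T) = f x.
Proof.
  induction n as [|n IH].
  - now rewrite Rmult_0_l, Rplus_0_r.
  - now rewrite S_INR, Rmult_plus_distr_r, Rmult_1_l, <- Rplus_assoc, f_per.
Qed.

Lemma periodic_Z k x : f (x + IZR k * T) = f x.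
Proof.
  destruct k as [|p|p]; simpl.
  - now rewrite Rmult_0_l, Rplus_0_r.
  - rewrite <- positive_nat_Z, <- INR_IZR_INZ; apply periodic_nat.
  - rewrite <- (periodic_nat (Pos.to_nat p)), INR_IZR_INZ, positive_nat_Z.
    f_equal; rewrite <- Pos2Z.opp_pos, opp_IZR; ring.
Qed.

Lemma periodic_reduce th : 0 < T ->
  forall x, exists y, th <= y < th + T /\ f x = f y.
Proof.
  intros HT x.
  set (k := Int_part ((x - th) / T)).
  destruct (base_Int_part ((x - th) / T)) as [Hk1 Hk2]; fold k in Hk1, Hk2.
  exists (x - IZR k * T); split.
  - assert (E : x - th = (x - th) / T * T) by (field; lra).
    split; nra.
  - rewrite <- (periodic_Z k (x - IZR k * T)); f_equal; ring.
Qed.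

Lemma Derive_periodic : (forall x, ex_derive f x) -> periodic T (Derive f).
Proof.
  intros Hd x.
  symmetry; apply is_derive_unique.
  apply (is_derive_ext (fun y => f (y + T))); [intros; apply f_per|].
  auto_derive; [apply Hd | apply Rmult_1_l].
Qed.

Hypothesis f_cont : forall x, continuous f x.

Lemma RInt_periodic_translate a b : RInt f (a + T) (b + T) = RInt f a b.
Proof.
  pose proof (RInt_comp_lin f 1 T a b (ex_RInt_continuous_R f _ _ f_cont)) as E.
  rewrite !Rmult_1_l in E; rewrite <- E.
  apply RInt_ext; intros x _. rewrite (scal_one (V := R_NormedModule)), Rmult_1_l. apply f_per.
Qed.

Lemma RInt_one_period a : RInt f a (a + T) = RInt f 0 T.
Proof.
  assert (ex_f : forall a b, ex_RInt f a b) by (intros; now apply ex_RInt_continuous_R).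
  rewrite <- (RInt_Chasles f a 0), <- (RInt_Chasles f 0 T (a + T)) by apply ex_f.
  replace (RInt f T (a + T)) with (RInt f 0 a)
    by (rewrite <- RInt_periodic_translate, Rplus_0_l; reflexivity).
  rewrite <- (opp_RInt_swap f 0 a) by apply ex_f.
  unfold plus, opp; simpl; ring.
Qed.

Lemma RInt_periods a n : RInt f a (a + INR n * T) = INR n * RInt f 0 T.
Proof.
  induction n as [|n IH].
  - now rewrite Rmult_0_l, Rplus_0_r, RInt_point, Rmult_0_l.
  - rewrite S_INR, <- (RInt_Chasles f a (a + INR n * T)) by apply ex_RInt_continuous_R, f_cont.
    replace (a + (INR n + 1) * T) with (a + INR n * T + T) by ring.
    rewrite IH, RInt_one_period.
    unfold plus; simpl; ring.
Qed.

End Periodic.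

Lemma RInt_weighted_lower_bound (w g : R -> R) c a b : a <= b ->
  (forall x, continuous w x) -> (forall x, continuous g x) ->
  (forall x, a < x < b -> 0 <= g x) -> (forall x, a < x < b -> c <= w x) ->
  c * RInt g a b <= RInt (fun x => w x * g x) a b.
Proof.
  intros Hab Hw Hg Hg0 Hc.
  assert (ex_g : ex_RInt g a b) by (apply ex_RInt_continuous_R; exact Hg).
  rewrite <- (RInt_scal (V := R_CompleteNormedModule) g a b c ex_g
              : RInt (fun x => c * g x) a b = c * RInt g a b).
  apply RInt_le; [exact Hab | exact (ex_RInt_scal (V := R_CompleteNormedModule) g a b c ex_g) | |].
  - apply ex_RInt_continuous_R; intros x.
    apply (continuous_mult (K := R_AbsRing)); auto.
  - intros x Hx. apply Rmult_le_compat_r; auto.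
Qed.

Lemma RInt_eq0_nonneg_interior (g : R -> R) a b : (forall x, continuous g x) ->
  (forall x, a < x < b -> 0 <= g x) -> RInt g a b = 0 ->
  forall y, a < y < b -> g y = 0.
Proof.
  intros Hc Hg0 Hint y Hy.
  destruct (Rle_lt_or_eq_dec 0 (g y) (Hg0 y Hy)) as [Hpos | Hzero]; [exfalso | now symmetry].
  assert (Hnear : locally y (fun x => g y / 2 < g x)).
  { assert (Hhalf : 0 < g y / 2) by lra.
    apply (Hc y (fun z => g y / 2 < z)).
    exists (mkposreal _ Hhalf); simpl.
    intros z Hz; apply Rabs_lt_between' in Hz; lra. }
  destruct Hnear as [[d d_pos] Hd]; simpl in Hd.
  set (e := Rmin (d / 2) (Rmin ((y - a) / 2) ((b - y) / 2))).
  assert (He : 0 < e /\ e <= d / 2 /\ e <= (y - a) / 2 /\ e <= (b - y) / 2).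
  { unfold e; repeat split.
    - repeat apply Rmin_pos; lra.
    - apply Rmin_l.
    - eapply Rle_trans; [apply Rmin_r | apply Rmin_l].
    - eapply Rle_trans; [apply Rmin_r | apply Rmin_r]. }
  assert (ex_g : forall a b, ex_RInt g a b) by (intros; now apply ex_RInt_continuous_R).
  assert (Hleft : 0 <= RInt g a (y - e)).
  { apply RInt_ge_0; [lra | apply ex_g | intros; apply Hg0; lra]. }
  assert (Hmid : 0 < RInt g (y - e) (y + e)).
  { apply RInt_gt_0; [lra | | intros; apply Hc].
    intros x Hx. enough (g y / 2 < g x) by lra.
    apply Hd; apply Rabs_lt_between'; lra. }
  assert (Hright : 0 <= RInt g (y + e) b).
  { apply RInt_ge_0; [lra | apply ex_g | intros; apply Hg0; lra]. }
  rewrite <- (RInt_Chasles g a (y - e)), <- (RInt_Chasles g (y - e) (y + e)) in Hint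
    by apply ex_g.
  unfold plus in Hint; simpl in Hint; lra.
Qed.

Lemma continuous_eq0_right (f : R -> R) a b : a < b -> continuous f a ->
  (forall y, a < y < b -> f y = 0) -> f a = 0.
Proof.
  intros Hab Hc Hf.
  assert (Hba : 0 < b - a) by lra.
  apply (filterlim_locally_unique (F := at_right a) f).
  - exact (filterlim_filter_le_1 f (filter_le_within _) Hc).
  - apply (filterlim_ext_loc (fun _ => 0)); [| apply filterlim_const].
    exists (mkposreal _ Hba); simpl.
    intros y Hy Hay; symmetry; apply Hf.
    apply Rabs_lt_between' in Hy; lra.
Qed.

Lemma green_identity (w T th : R) (u h : R -> R) :
  (forall x, continuous h x) -> periodic T u ->
  (forall x, ex_derive u x) -> (forall x, ex_derive (Derive u) x) ->
  (forall x, Derive (Derive u) x + w ^ 2 * u x = h x) ->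
  RInt (fun p => cos (w * (p - th) - w * T / 2) * h p) th (th + T)
    = 2 * w * sin (w * T / 2) * u th.
Proof.
  intros Hc Hper Hd Hdd Heq.
  set (F := fun p => cos (w * (p - th) - w * T / 2) * Derive u p
                   + w * sin (w * (p - th) - w * T / 2) * u p).
  assert (HF : forall p, is_derive F p (cos (w * (p - th) - w * T / 2) * h p)).
  { intros p; unfold F; rewrite <- Heq.
    auto_derive; [repeat split; auto |].
    change (fun x => Derive u x) with (Derive u); change (fun x => u x) with u.
    unfold Rminus; ring. }
  assert (HI : is_RInt (fun p => cos (w * (p - th) - w * T / 2) * h p) th (th + T)
                       (minus (F (th + T)) (F th))).
  { apply (is_RInt_derive F); intros p _; [apply HF |].
    apply (continuous_mult (K := R_AbsRing)); [apply continuous_cos_affine | apply Hc]. }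
  rewrite (is_RInt_unique _ _ _ _ HI).
  unfold F, minus, plus, opp; simpl.
  replace (w * (th + T - th) - w * T / 2) with (w * T / 2) by field.
  replace (w * (th - th) - w * T / 2) with (- (w * T / 2)) by field.
  rewrite cos_neg, sin_neg, Hper, Derive_periodic by auto.
  ring.
Qed.

Section InverseOperator.
Variables (T : R) (h u : R -> R).
Hypothesis T_pos : 0 < T.
Hypothesis T_le : T <= PI / 2.
Hypothesis h_cont : forall x, continuous h x.
Hypothesis h_nonneg : forall x, 0 <= h x.
Hypothesis h_per : periodic T h.
Hypothesis u_per : periodic T u.
Hypothesis u_derivable : forall x, ex_derive u x.
Hypothesis u'_derivable : forall x, ex_derive (Derive u) x.
Hypothesis u_solves : forall x, Derive (Derive u) x + 4 * u x = h x.

Lemma inv_op_green th :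
  RInt (fun p => cos (2 * (p - th) - T) * h p) th (th + T) = 4 * sin T * u th.
Proof.
  assert (u_solves' : forall x, Derive (Derive u) x + 2 ^ 2 * u x = h x)
    by (intros x; rewrite <- u_solves; ring).
  pose proof (green_identity 2 T th u h h_cont u_per u_derivable u'_derivable u_solves') as G.
  replace (2 * T / 2) with T in G by field.
  replace (2 * 2) with 4 in G by ring.
  exact G.
Qed.

Lemma inv_op_lower_bound th : cos T * RInt h 0 T <= 4 * sin T * u th.
Proof.
  rewrite <- inv_op_green, <- (RInt_one_period T h h_per h_cont th).
  apply RInt_weighted_lower_bound; auto; [lra | apply continuous_cos_affine |].
  intros p Hp; apply cos_le_cos_bound; lra.
Qed.

Lemma inv_op_zero_h_zero th : u th = 0 -> forall x, h x = 0.
Proof.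
  intros Hu.
  assert (Hinside : forall y, th < y < th + T -> h y = 0).
  { intros y Hy.
    assert (Hcos : forall p, th < p < th + T -> 0 < cos (2 * (p - th) - T))
      by (intros p Hp; apply cos_gt_0; lra).
    apply (Rmult_eq_reg_l (cos (2 * (y - th) - T))); [| apply Rgt_not_eq, Hcos; auto].
    rewrite Rmult_0_r.
    apply (RInt_eq0_nonneg_interior (fun p => cos (2 * (p - th) - T) * h p) th (th + T)); auto.
    - intros x; apply (continuous_mult (K := R_AbsRing)); auto; apply continuous_cos_affine.
    - intros p Hp; apply Rmult_le_pos; auto; apply Rlt_le, Hcos; auto.
    - rewrite inv_op_green, Hu; apply Rmult_0_r. }
  assert (Hth : h th = 0) by (apply (continuous_eq0_right h th (th + T)); auto; lra).
  intros x.
  destruct (periodic_reduce T h h_per th T_pos x) as [y [[Hy1 Hy2] ->]].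
  destruct (Rle_lt_or_eq_dec th y Hy1) as [Hlt | <-]; auto.
Qed.

End InverseOperator.

Theorem mainTheorem6 :
  forall m : nat, (4 <= m)%nat ->
  exists Ct : R,
    ((5 <= m)%nat -> 0 < Ct) /\ ((m = 4)%nat -> Ct = 0) /\
    forall h : R -> R,
      (forall x, continuous h x) ->
      (forall x, 0 <= h x) ->
      periodic (2 * PI / INR m) h ->
      forall u : R -> R, inv_op_d2_plus4 m h u ->
        (forall theta, 12 * u theta >= Ct * (/ (2 * PI) * RInt h (- PI) PI)) /\
        ((exists theta, 12 * u theta = 0) -> forall x, h x = 0).
Proof.
  intros m Hm.
  pose proof PI_RGT_0 as HPI.
  assert (Hm4 : 4 <= INR m) by (replace 4 with (INR 4) by (simpl; ring); now apply le_INR).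
  set (T := 2 * PI / INR m).
  assert (HmT : INR m * T = 2 * PI) by (unfold T; field; lra).
  assert (T_pos : 0 < T) by (unfold T; apply Rdiv_lt_0_compat; lra).
  assert (T_le : T <= PI / 2) by nra.
  assert (sinT_pos : 0 < sin T) by (apply sin_gt_0; lra).
  exists (3 * T * cos T / sin T); split; [| split].
  - intros H5.
    assert (Hm5 : 5 <= INR m) by (replace 5 with (INR 5) by (simpl; ring); now apply le_INR).
    assert (0 < cos T) by (apply cos_gt_0; nra).
    apply Rdiv_lt_0_compat; [apply Rmult_lt_0_compat |]; lra.
  - intros ->.
    replace T with (PI / 2) by (unfold T; simpl; field).
    rewrite cos_PI2; unfold Rdiv; ring.
  - intros h Hc Hh Hp u [Hup [Hd [Hdd Heq]]]; split.
    + intros th.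
      pose proof (inv_op_lower_bound T h u T_pos T_le Hc Hh Hp Hup Hd Hdd Heq th) as Hbound.
      assert (Htotal : RInt h (- PI) PI = INR m * RInt h 0 T)
        by (rewrite <- (RInt_periods T h Hp Hc (- PI) m); f_equal; lra).
      rewrite Htotal.
      replace (3 * T * cos T / sin T * (/ (2 * PI) * (INR m * RInt h 0 T)))
        with (3 / sin T * (cos T * RInt h 0 T)) by (rewrite <- HmT; field; lra).
      replace (12 * u th) with (3 / sin T * (4 * sin T * u th)) by (field; lra).
      apply Rle_ge, Rmult_le_compat_l; [apply Rlt_le, Rdiv_lt_0_compat |]; lra.
    + intros [th Hth].
      apply (inv_op_zero_h_zero T h u T_pos T_le Hc Hh Hp Hup Hd Hdd Heq th); lra.
Qed.
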